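(* Let $G$ be a $k$-cozy graph whose edge connectivity $\kappa'(G)$ satisfies $\kappa'(G)<k$. Then $\kappa'(G)$ is even.
   Context: An undirected graph $G$ is $k$-cozy if it is connected, $k$-regular, and equipped with a $1$-factorization, i.e., an assignment of colors from $\{1,\dots,k\}$ to its edges such that the $k$ edges incident at each vertex receive distinct colors. The edge connectivity $\kappa'(G)$ is the minimum number of edges whose removal disconnects $G$. *)

From mathcomp Require Import all_boot.
Set Implicit Arguments. Unset Strict Implicit. Unset Printing Implicit Defensive.

Section Graphs.
Variable T : finType.

Definition simple_graph (e : rel T) : Prop := symmetric e /\ irreflexive e.

Definition edge_set (e : rel T) : {set {set T}} :=
  [set [set x; y] | x in T, y in T & e x y].

Definition connected_graph (e : rel T) : Prop := forall x y : T, connect e x y.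

Definition regular (k : nat) (e : rel T) : Prop :=
  forall v : T, #|[set u | e v u]| = k.

(* 1-factorization: colouring of edges with k colours ('I_k ~ {1..k})
   such that the edges at each vertex receive distinct colours *)
Definition one_factorization (k : nat) (e : rel T) (c : {set T} -> 'I_k) : Prop :=
  forall v u w : T, e v u -> e v w -> u != w -> c [set v; u] != c [set v; w].

Definition cozy (k : nat) (e : rel T) (c : {set T} -> 'I_k) : Prop :=
  [/\ simple_graph e, connected_graph e, regular k e & one_factorization e c].

Definition remove_edges (e : rel T) (F : {set {set T}}) : rel T :=
  fun x y => e x y && ([set x; y] \notin F).

Definition disconnecting_set (e : rel T) (F : {set {set T}}) : Prop :=
  F \subset edge_set e /\ exists x y : T, ~~ connect (remove_edges e F) x y.

Definition edge_connectivity (e : rel T) (n : nat) : Prop :=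
  (exists2 F, disconnecting_set e F & #|F| = n) /\
  (forall F, disconnecting_set e F -> n <= #|F|).
End Graphs.

(* The edges of colour i form a perfect matching, so the number of colour-i
   edges leaving a vertex set S has the parity of |S|. A minimum disconnecting
   set is the edge cut of some S. If |S| is odd, every colour leaves S and the
   cut has at least k edges; otherwise every colour contributes an even number
   of edges to the cut. *)
From mathcomp Require Import all_boot.
Set Implicit Arguments. Unset Strict Implicit. Unset Printing Implicit Defensive.

Section FixfreeInvolution.
Variables (T : finType) (f : T -> T).
Hypotheses (fK : involutive f) (f_fixfree : forall x, f x != x).

Lemma order_fixfree_involution x : order f x = 2.
Proof.
apply: (@order_cycle _ _ [:: x; f x]); last exact: mem_head.
  by rewrite /= fK !eqxx.
by rewrite /= inE eq_sym f_fixfree.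
Qed.

Lemma fclosed_card_even (A : {pred T}) : fclosed f A -> ~~ odd #|A|.
Proof.
move=> clA; rewrite -(@fcard_order_set _ _ (inv_inj fK) 2 _ _ clA) ?muln2 ?odd_double //.
by apply/subsetP => x _; rewrite inE order_fixfree_involution.
Qed.

Lemma odd_card_leaving (S : {set T}) : odd #|S :\: f @^-1: S| = odd #|S|.
Proof.
rewrite -(cardsID (f @^-1: S) S) oddD.
suff /negbTE-> : ~~ odd #|S :&: f @^-1: S| by [].
apply: fclosed_card_even => x _ /eqP <-.
by rewrite !inE fK andbC.
Qed.

End FixfreeInvolution.

Section EdgeCuts.
Variables (T : finType) (e : rel T).

Definition edge_cut (S : {set T}) : {set {set T}} :=
  [set [set x; y] | x in S, y in ~: S & e x y].

Lemma edge_cut_sub_edges S : edge_cut S \subset edge_set e.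
Proof.
apply/subsetP => E /imset2P[x y _]; rewrite !inE => /andP[_ exy] ->.
by apply/imset2P; exists x y; rewrite ?inE.
Qed.

Lemma edge_cut_component_sub F x :
  edge_cut [set y | connect (remove_edges e F) x y] \subset F.
Proof.
apply/subsetP => E /imset2P[y z]; rewrite !inE => xy /andP[xNz eyz] ->.
apply: contraNT xNz => yzNF; apply: connect_trans xy (connect1 _).
by rewrite /remove_edges eyz yzNF.
Qed.

Hypothesis e_sym : symmetric e.

Lemma edge_cut_disconnects (S : {set T}) x y :
  x \in S -> y \notin S -> ~~ connect (remove_edges e (edge_cut S)) x y.
Proof.
move=> xS yNS; apply: contra yNS => /(closed_connect _)<- //.
move=> u v /andP[euv uvNcut]; apply: contraNeq uvNcut.
have [uS|uNS] := boolP (u \in S); have [vS|vNS] := boolP (v \in S) => // _.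
  by apply/imset2P; exists u v; rewrite ?inE ?vNS.
by apply/imset2P; exists v u; rewrite 1?setUC // !inE uNS e_sym.
Qed.

Lemma edge_connectivity_edge_cut n :
  edge_connectivity e n -> exists S, #|edge_cut S| = n.
Proof.
move=> [[F [_ [x [y xNy]]] <-] Fmin].
set S := [set z | connect (remove_edges e F) x z].
exists S; apply/eqP; rewrite eqn_leq subset_leq_card ?edge_cut_component_sub //.
apply: Fmin; split; first exact: edge_cut_sub_edges.
by exists x, y; apply: edge_cut_disconnects; rewrite !inE ?connect0.
Qed.

End EdgeCuts.

Section ColouredCuts.
Variables (T : finType) (k : nat) (e : rel T) (c : {set T} -> 'I_k).
Hypotheses (e_sym : symmetric e) (e_irr : irreflexive e) (e_reg : regular k e)
  (c_fact : one_factorization e c).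

Lemma colour_inj v : {in [set u | e v u] &, injective (fun u => c [set v; u])}.
Proof.
move=> u w; rewrite !inE => evu evw cuw.
have [//|uw] := eqVneq u w.
by move: (c_fact evu evw uw); rewrite cuw eqxx.
Qed.

(* By regularity, the k colours at v are all distinct, hence all present. *)
Lemma colour_at_vertex v (i : 'I_k) : exists2 u, e v u & c [set v; u] = i.
Proof.
have colours_full : (fun u => c [set v; u]) @: [set u | e v u] = setT.
  apply/eqP; rewrite eqEcard subsetT cardsT card_ord card_in_imset ?e_reg ?leqnn //.
  exact: colour_inj.
have : i \in (fun u => c [set v; u]) @: [set u | e v u] by rewrite colours_full.
by case/imsetP => u; rewrite inE => evu ->; exists u.
Qed.

Definition mate (i : 'I_k) v := odflt v [pick u | e v u && (c [set v; u] == i)].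

Lemma mateP i v : e v (mate i v) /\ c [set v; mate i v] = i.
Proof.
rewrite /mate; case: pickP => [u /andP[evu /eqP] //| no_mate] /=.
by have [u evu /eqP cu] := colour_at_vertex v i; move: (no_mate u); rewrite evu cu.
Qed.

Lemma mate_eq i v u : e v u -> c [set v; u] = i -> mate i v = u.
Proof.
have [evm cm] := mateP i v; move=> evu cu.
by apply: (@colour_inj v); rewrite ?inE ?cm ?cu.
Qed.

Lemma mateK i : involutive (mate i).
Proof.
move=> v; have [evm cm] := mateP i v.
by apply: mate_eq; rewrite 1?e_sym // setUC.
Qed.

Lemma mate_neq i v : mate i v != v.
Proof. by have [evm _] := mateP i v; apply: contraTneq evm => ->; rewrite e_irr. Qed.

Definition edge_cut_colour (S : {set T}) i := [set E in edge_cut e S | c E == i].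

Lemma card_edge_cut (S : {set T}) :
  #|edge_cut e S| = \sum_(i < k) #|edge_cut_colour S i|.
Proof.
rewrite -sum1_card (partition_big c predT) //=; apply: eq_bigr => i _.
by rewrite -sum1_card; apply: eq_bigl => E; rewrite [RHS]inE.
Qed.

Lemma edge_cut_colourE (S : {set T}) i :
  edge_cut_colour S i = (fun v => [set v; mate i v]) @: (S :\: mate i @^-1: S).
Proof.
apply/setP => E; apply/idP/imsetP => [|[v]].
  rewrite !inE => /andP[/imset2P[x y xS]]; rewrite !inE => /andP[yNS exy] -> /eqP cxy.
  by exists x; rewrite ?inE (mate_eq exy cxy) ?yNS.
rewrite !inE => /andP[mNS vS] ->; have [evm cm] := mateP i v.
by rewrite cm eqxx andbT; apply/imset2P; exists v (mate i v); rewrite ?inE ?mNS.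
Qed.

Lemma odd_edge_cut_colour (S : {set T}) i :
  odd #|edge_cut_colour S i| = odd #|S|.
Proof.
rewrite edge_cut_colourE card_in_imset ?odd_card_leaving //.
- exact: mateK.
- exact: mate_neq.
move=> v w; rewrite !inE => /andP[mvNS vS] /andP[mwNS wS] vw.
have : v \in [set w; mate i w] by rewrite -vw set21.
by rewrite !inE => /orP[/eqP // | /eqP vm]; rewrite -vm vS in mwNS.
Qed.

Lemma odd_side_edge_cut_large (S : {set T}) : odd #|S| -> k <= #|edge_cut e S|.
Proof.
move=> oddS; rewrite card_edge_cut -[k in k <= _]card_ord -sum1_card.
apply: leq_sum => i _; rewrite lt0n; apply: contraTneq oddS => no_edge.
by rewrite -(odd_edge_cut_colour S i) no_edge.
Qed.

Lemma even_side_edge_cut_even (S : {set T}) :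
  ~~ odd #|S| -> ~~ odd #|edge_cut e S|.
Proof.
move=> evenS; rewrite card_edge_cut; elim/big_ind: _ => //.
  by move=> a b; rewrite oddD => /negPf-> /negPf->.
by move=> i _; rewrite odd_edge_cut_colour.
Qed.

End ColouredCuts.

Theorem mainTheorem11 (T : finType) (k : nat) (e : rel T) (c : {set T} -> 'I_k)
  (n : nat) :
  cozy e c -> edge_connectivity e n -> n < k -> ~~ odd n.
Proof.
move=> [[e_sym e_irr] _ e_reg c_fact] /(edge_connectivity_edge_cut e_sym)[S <-].
move=> small_cut.
have [oddS | evenS] := boolP (odd #|S|).
  by move: small_cut; rewrite ltnNge (odd_side_edge_cut_large e_sym e_irr e_reg c_fact).
exact: (even_side_edge_cut_even e_sym e_irr e_reg c_fact).
Qed.
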